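(* Let $A$ be an evolution algebra with natural basis $B=\{e_i:i\in\Lambda\}$ and structure matrix $(\omega_{ki})$. Then $M$ is a maximal modular ideal of $A$ if and only if $M=\mathrm{lin}\{e_i:i\in\Lambda\setminus\{i_0\}\}$ for some modular index $i_0\in\Lambda$, in which case $\frac{1}{\omega_{i_0i_0}}e_{i_0}$ is a modular unit for $M$.
   Context: An evolution algebra is an algebra $A$ over $\mathbb{K}\in\{\mathbb{R},\mathbb{C}\}$ with a basis $\{e_i:i\in\Lambda\}$ (natural basis) with $e_ie_j=0$ for $i\neq j$; write $e_j^2=\sum_k\omega_{kj}e_k$. An ideal $M$ is modular if some $u\in A$ (modular unit) satisfies $a-au\in M$ for all $a\in A$; a maximal modular ideal is a proper modular ideal maximal among proper modular ideals. An index $i_0$ is a modular index if $\omega_{i_0i_0}\neq0$ and $\omega_{i_0j}=0$ for all $j\neq i_0$. *)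

From HB Require Import structures.
From mathcomp Require Import all_boot all_order all_algebra.
Set Implicit Arguments.
Unset Strict Implicit.
Unset Printing Implicit Defensive.
Import Order.TTheory GRing.Theory Num.Theory.
Local Open Scope ring_scope.

Section Evolution.
Variables (K : fieldType) (A : lmodType K) (mul : A -> A -> A).

Definition bilinear_mul : Prop :=
  (forall (k : K) (x y z : A), mul (k *: x + y) z = k *: mul x z + mul y z) /\
  (forall (k : K) (x y z : A), mul z (k *: x + y) = k *: mul z x + mul z y).

Variables (L : eqType) (e : L -> A) (w : L -> L -> K).

Definition spans : Prop :=
  forall a : A, exists (s : seq L) (c : L -> K), a = \sum_(i <- s) c i *: e i.

Definition lin_indep : Prop :=
  forall (s : seq L) (c : L -> K), uniq s ->
    \sum_(i <- s) c i *: e i = 0 -> forall i, i \in s -> c i = 0.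

Definition natural_basis : Prop :=
  [/\ spans, lin_indep & forall i j, i != j -> mul (e i) (e j) = 0].

Definition structure_matrix : Prop :=
  forall j, exists s : seq L,
    [/\ uniq s, (forall k, w k j != 0 -> k \in s) &
        mul (e j) (e j) = \sum_(k <- s) w k j *: e k].

Definition evolution_algebra : Prop :=
  [/\ bilinear_mul, natural_basis & structure_matrix].

Definition modular_index (i0 : L) : Prop :=
  w i0 i0 != 0 /\ forall j, j != i0 -> w i0 j = 0.

Definition lin_except (i0 : L) : A -> Prop := fun x =>
  exists (s : seq L) (c : L -> K),
    (forall i, i \in s -> i != i0) /\ x = \sum_(i <- s) c i *: e i.

End Evolution.

Section Ideals.
Variables (K : fieldType) (A : lmodType K) (mul : A -> A -> A).

Definition is_ideal (M : A -> Prop) : Prop :=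
  [/\ M 0, (forall x y, M x -> M y -> M (x + y)),
      (forall (k : K) x, M x -> M (k *: x)) &
      (forall a m, M m -> M (mul a m) /\ M (mul m a))].

Definition modular_unit (M : A -> Prop) (u : A) : Prop :=
  forall a : A, M (a - mul a u).

Definition modular_ideal (M : A -> Prop) : Prop :=
  is_ideal M /\ exists u, modular_unit M u.

Definition proper (M : A -> Prop) : Prop := exists a, ~ M a.

Definition maximal_modular_ideal (M : A -> Prop) : Prop :=
  [/\ modular_ideal M, proper M &
      forall N : A -> Prop, modular_ideal N -> proper N ->
        (forall x, M x -> N x) -> forall x, N x -> M x].

End Ideals.

From Pilot Require Import Defs.
From HB Require Import structures.
From mathcomp Require Import all_boot all_order all_algebra.
From Stdlib Require Import Classical.
From Stdlib Require Import FunctionalExtensionality PropExtensionality.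
Import GRing.Theory Num.Theory.
Local Open Scope ring_scope.

Set Implicit Arguments.
Unset Strict Implicit.
Unset Printing Implicit Defensive.

(* Write [E_j0] for lin{e_i : i <> j0}.  Every [a] decomposes as [c e_j0 + y]
   with [y] in [E_j0], so [E_j0] is a maximal subspace, and [E_j0 A + A E_j0]
   lies in the span of the squares [e_i^2], i <> j0.  Hence [E_j0] is an ideal
   iff the [e_j0]-coordinate [w j0 j] of every [e_j^2], j <> j0, vanishes, and
   it is modular iff moreover [w j0 j0 <> 0], with unit [e_j0 / w j0 j0].
   Conversely, if [M] is a maximal modular ideal with unit [u], pick [e_j0]
   outside [M].  Since [e_j u] is a multiple of [e_j^2], each [e_j] is
   congruent modulo [M] to a multiple of [e_j^2]; this makes [M + E_j0] an
   ideal, and it still misses [e_j0].  By maximality [E_j0 <= M], and [M] is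
   proper, so [M = E_j0]. *)

Lemma sumr_count_mem (V : nmodType) (I : eqType) (s t : seq I) (F : I -> V) :
  uniq t -> {subset s <= t} ->
  \sum_(i <- s) F i = \sum_(i <- t) F i *+ count_mem i s.
Proof.
move=> t_uniq; elim: s => [|x s IHs] s_t.
  by rewrite big_nil big1 // => i _; rewrite mulr0n.
have x_t : x \in t by apply: s_t; rewrite inE eqxx.
rewrite big_cons IHs => [|y ys]; last by apply: s_t; rewrite inE ys orbT.
under [RHS]eq_bigr => i _ do rewrite /= mulrnDr.
rewrite big_split /=; congr (_ + _).
rewrite (big_rem x x_t) /= eqxx mulr1n big1_seq ?addr0 // => i /andP[_].
rewrite (mem_rem_uniq _ t_uniq) inE => /andP[ix _].
by rewrite eq_sym (negbTE ix).
Qed.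

Lemma pred_ext (T : Type) (P Q : T -> Prop) :
  (forall x, P x <-> Q x) -> P = Q.
Proof.
move=> PQ; apply: functional_extensionality => x.
exact: propositional_extensionality.
Qed.

Section Subspaces.
Variables (K : fieldType) (A : lmodType K).

Definition subspace (P : A -> Prop) : Prop :=
  [/\ P 0, forall x y, P x -> P y -> P (x + y) & forall k x, P x -> P (k *: x)].

Definition addsp (P Q : A -> Prop) : A -> Prop :=
  fun x => exists p q, [/\ P p, Q q & x = p + q].

Lemma subspaceB P x y : subspace P -> P x -> P y -> P (x - y).
Proof. by case=> _ PD PZ Px Py; rewrite -scaleN1r; apply/PD/PZ. Qed.

Lemma subspace_sum P (I : eqType) (s : seq I) (F : I -> A) :
  subspace P -> (forall i, i \in s -> P (F i)) -> P (\sum_(i <- s) F i).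
Proof.
case=> P0 PD _; elim: s => [|x s IHs] PF; first by rewrite big_nil.
rewrite big_cons; apply: PD; first by apply: PF; rewrite inE eqxx.
by apply: IHs => i si; apply: PF; rewrite inE si orbT.
Qed.

Lemma addsp_subspace P Q : subspace P -> subspace Q -> subspace (addsp P Q).
Proof.
case=> P0 PD PZ [Q0 QD QZ]; split.
- by exists 0, 0; rewrite addr0.
- move=> _ _ [p1 [q1 [Pp1 Qq1 ->]]] [p2 [q2 [Pp2 Qq2 ->]]].
  exists (p1 + p2), (q1 + q2).
  by rewrite addrACA; split; [apply: PD|apply: QD|].
- move=> k _ [p [q [Pp Qq ->]]].
  by exists (k *: p), (k *: q); rewrite scalerDr; split; [apply: PZ|apply: QZ|].
Qed.

Lemma addspl P Q x : subspace Q -> P x -> addsp P Q x.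
Proof. by case=> Q0 _ _ Px; exists x, 0; rewrite addr0. Qed.

Lemma addspr P Q x : subspace P -> Q x -> addsp P Q x.
Proof. by case=> P0 _ _ Qx; exists 0, x; rewrite add0r. Qed.

Lemma ideal_subspace (mul : A -> A -> A) M : is_ideal mul M -> subspace M.
Proof. by case. Qed.

End Subspaces.

Section Bilinear.
Variables (K : fieldType) (A : lmodType K) (mul : A -> A -> A).
Hypothesis mul_bilinear : bilinear_mul mul.

Lemma mul0l z : mul 0 z = 0.
Proof.
have := mul_bilinear.1 1 0 0 z; rewrite !scale1r addr0 => mul00.
by apply: (@addrI _ (mul 0 z)); rewrite addr0 -mul00.
Qed.

Lemma mul0r z : mul z 0 = 0.
Proof.
have := mul_bilinear.2 1 0 0 z; rewrite !scale1r addr0 => mul00.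
by apply: (@addrI _ (mul z 0)); rewrite addr0 -mul00.
Qed.

Lemma mulZl k x z : mul (k *: x) z = k *: mul x z.
Proof. by rewrite -[k *: x]addr0 mul_bilinear.1 mul0l addr0. Qed.

Lemma mulZr k x z : mul z (k *: x) = k *: mul z x.
Proof. by rewrite -[k *: x]addr0 mul_bilinear.2 mul0r addr0. Qed.

Lemma mulDl x y z : mul (x + y) z = mul x z + mul y z.
Proof. by rewrite -[x in LHS]scale1r mul_bilinear.1 scale1r. Qed.

Lemma mulDr x y z : mul z (x + y) = mul z x + mul z y.
Proof. by rewrite -[x in LHS]scale1r mul_bilinear.2 scale1r. Qed.

Lemma mulBr x y z : mul z (x - y) = mul z x - mul z y.
Proof. by rewrite mulDr -scaleN1r mulZr scaleN1r. Qed.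

Lemma mul_suml (I : Type) (s : seq I) (F : I -> A) z :
  mul (\sum_(i <- s) F i) z = \sum_(i <- s) mul (F i) z.
Proof.
by elim: s => [|x s IHs]; rewrite ?big_nil ?mul0l // !big_cons mulDl IHs.
Qed.

Lemma mul_sumr (I : Type) (s : seq I) (F : I -> A) z :
  mul z (\sum_(i <- s) F i) = \sum_(i <- s) mul z (F i).
Proof.
by elim: s => [|x s IHs]; rewrite ?big_nil ?mul0r // !big_cons mulDr IHs.
Qed.

End Bilinear.

Section EvolutionAlgebra.
Variables (K : fieldType) (A : lmodType K) (mul : A -> A -> A).
Variables (L : eqType) (e : L -> A) (w : L -> L -> K).
Hypothesis bilin : bilinear_mul mul.
Hypothesis e_spans : spans e.
Hypothesis e_free : lin_indep e.
Hypothesis mul_e_orth : forall i j, i != j -> mul (e i) (e j) = 0.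
Hypothesis e_sqr : structure_matrix mul e w.

Lemma mul_e_l i a : exists r, mul (e i) a = r *: mul (e i) (e i).
Proof.
have [s [c ->]] := e_spans a; exists (\sum_(k <- s | k == i) c k).
rewrite (mul_sumr bilin) (bigID (pred1 i)) /= [X in _ + X]big1 => [|k ki].
  rewrite addr0 scaler_suml; apply: eq_bigr => k /eqP ->.
  by rewrite (mulZr bilin).
by rewrite (mulZr bilin) mul_e_orth ?scaler0 // eq_sym.
Qed.

Lemma mul_e_r i a : exists r, mul a (e i) = r *: mul (e i) (e i).
Proof.
have [s [c ->]] := e_spans a; exists (\sum_(k <- s | k == i) c k).
rewrite (mul_suml bilin) (bigID (pred1 i)) /= [X in _ + X]big1 => [|k ki].
  rewrite addr0 scaler_suml; apply: eq_bigr => k /eqP ->.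
  by rewrite (mulZl bilin).
by rewrite (mulZl bilin) mul_e_orth ?scaler0.
Qed.

Section LinExcept.
Variable j0 : L.
Local Notation E := (lin_except e j0).

Lemma lin_except_subspace : subspace E.
Proof.
split.
- by exists [::], (fun _ => 0); rewrite big_nil.
- move=> _ _ [s1 [c1 [s1_j0 ->]]] [s2 [c2 [s2_j0 ->]]].
  pose t := undup (s1 ++ s2).
  have t_uniq : uniq t := undup_uniq _.
  exists t, (fun i => c1 i *+ count_mem i s1 + c2 i *+ count_mem i s2); split.
    by move=> i; rewrite mem_undup mem_cat => /orP[/s1_j0|/s2_j0].
  have s1_t : {subset s1 <= t} by move=> i si; rewrite mem_undup mem_cat si.
  have s2_t : {subset s2 <= t}.
    by move=> i si; rewrite mem_undup mem_cat si orbT.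
  rewrite (sumr_count_mem _ t_uniq s1_t) (sumr_count_mem _ t_uniq s2_t).
  by rewrite -big_split; apply: eq_bigr => i _; rewrite scalerDl !scalerMnl.
- move=> k _ [s [c [s_j0 ->]]]; exists s, (fun i => k * c i); split => //.
  by rewrite scaler_sumr; apply: eq_bigr => i _; rewrite scalerA.
Qed.

Lemma lin_except_e i : i != j0 -> E (e i).
Proof.
move=> i_j0; exists [:: i], (fun _ => 1); rewrite big_seq1 scale1r.
by split=> // k; rewrite inE => /eqP ->.
Qed.

Lemma lin_except_scale_e c : E (c *: e j0) -> c = 0.
Proof.
move=> [s [d [s_j0 c_e]]].
have j0_s : j0 \notin undup s.
  by rewrite mem_undup; apply/negP => /s_j0; rewrite eqxx.
(* compare coefficients in [c e_j0 - sum_i d_i e_i = 0], merging repeats *)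
pose f i := if i == j0 then c else - (d i *+ count_mem i s).
have /= := @e_free (j0 :: undup s) f; rewrite j0_s undup_uniq => /(_ isT).
pose g i := - ((d i *: e i) *+ count_mem i s).
rewrite big_cons {1}/f eqxx (eq_big_seq g) => [|i i_s]; last first.
  rewrite /f /g; case: eqP => [ij0|_]; first by rewrite -ij0 i_s in j0_s.
  by rewrite scaleNr scalerMnl.
rewrite sumrN -sumr_count_mem ?undup_uniq // => [|i]; last by rewrite mem_undup.
by rewrite -c_e subrr => /(_ erefl j0); rewrite inE eqxx /f eqxx; apply.
Qed.

Lemma lin_except_decomp x : exists c y, E y /\ x = c *: e j0 + y.
Proof.
have [s [c ->]] := e_spans x.
exists (\sum_(i <- s | i == j0) c i), (\sum_(i <- s | i != j0) c i *: e i).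
split.
  exists [seq i <- s | i != j0], c; rewrite big_filter.
  by split=> // i; rewrite mem_filter => /andP[].
rewrite (bigID (pred1 j0)) /= scaler_suml; congr (_ + _).
by apply: eq_bigr => i /eqP ->.
Qed.

Lemma sqr_decomp j : exists y, E y /\ mul (e j) (e j) = w j0 j *: e j0 + y.
Proof.
have [s [s_uniq w_s ->]] := e_sqr j.
exists (\sum_(k <- s | k != j0) w k j *: e k); split.
  exists [seq i <- s | i != j0], (fun k => w k j); rewrite big_filter.
  by split=> // i; rewrite mem_filter => /andP[].
rewrite (bigID (pred1 j0)) /=; congr (_ + _).
have [j0_s|j0_s] := boolP (j0 \in s).
  rewrite (big_rem j0 j0_s) /= eqxx big1_seq ?addr0 // => k /andP[/eqP-> ].
  by rewrite (mem_rem_uniq _ s_uniq) inE eqxx.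
have -> : w j0 j = 0 by apply/eqP; apply: contraNT j0_s; apply: w_s.
by rewrite scale0r big1_seq // => k /andP[/eqP-> k_s]; rewrite k_s in j0_s.
Qed.

Lemma mul_e_lin_except y : E y -> mul (e j0) y = 0 /\ mul y (e j0) = 0.
Proof.
move=> [s [c [s_j0 ->]]]; rewrite (mul_sumr bilin) (mul_suml bilin).
split; apply: big1_seq => i /andP[_ /s_j0 i_j0].
  by rewrite (mulZr bilin) mul_e_orth ?scaler0 // eq_sym.
by rewrite (mulZl bilin) mul_e_orth ?scaler0.
Qed.

Lemma lin_except_max_subspace (N : A -> Prop) :
  subspace N -> (forall x, E x -> N x) -> Defs.proper N -> forall x, N x -> E x.
Proof.
move=> N_sub E_N [b Nb] x Nx; have [c [y [Ey x_cy]]] := lin_except_decomp x.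
have Nce : N (c *: e j0).
  by rewrite -(addrK y (_ *: _)) -x_cy; apply: subspaceB => //; apply: E_N.
have [c0|c_neq0] := eqVneq c 0; first by rewrite x_cy c0 scale0r add0r.
have Ne : N (e j0).
  have [_ _ NZ] := N_sub.
  by rewrite -[e j0]scale1r -(mulVf c_neq0) -scalerA; apply: NZ.
case: Nb; have [c' [y' [Ey' ->]]] := lin_except_decomp b.
by case: N_sub => _ ND NZ; apply: ND; [apply: NZ | apply: E_N].
Qed.

Lemma mul_lin_except_closed (P : A -> Prop) a y :
  subspace P -> (forall i, i != j0 -> P (mul (e i) (e i))) ->
  E y -> P (mul a y) /\ P (mul y a).
Proof.
move=> P_sub P_sqr [s [c [s_j0 ->]]]; have [_ _ PZ] := P_sub.
rewrite (mul_sumr bilin) (mul_suml bilin).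
split; apply: subspace_sum => // i i_s.
  by rewrite (mulZr bilin); have [r ->] := mul_e_r i a; apply/PZ/PZ/P_sqr/s_j0.
by rewrite (mulZl bilin); have [r ->] := mul_e_l i a; apply/PZ/PZ/P_sqr/s_j0.
Qed.

Lemma lin_except_ideal : (forall j, j != j0 -> w j0 j = 0) -> is_ideal mul E.
Proof.
move=> w_j0; have E_sub := lin_except_subspace; have [E0 ED EZ] := E_sub.
split=> // a y Ey; apply: mul_lin_except_closed => // i i_j0.
by have [y' [Ey' ->]] := sqr_decomp i; rewrite w_j0 // scale0r add0r.
Qed.

Lemma lin_except_modular_unit :
  w j0 j0 != 0 -> modular_unit mul E ((w j0 j0)^-1 *: e j0).
Proof.
move=> w_neq0 b; have [c [y [Ey ->]]] := lin_except_decomp b.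
have [y' [Ey' sqr]] := sqr_decomp j0; have [_ _ EZ] := lin_except_subspace.
rewrite (mulZr bilin) (mulDl bilin) (mulZl bilin) sqr.
rewrite (mul_e_lin_except Ey).2 addr0.
suff -> : c *: e j0 + y - (w j0 j0)^-1 *: (c *: (w j0 j0 *: e j0 + y'))
          = y - ((w j0 j0)^-1 * c) *: y'.
  by apply: subspaceB lin_except_subspace Ey (EZ _ _ Ey').
rewrite !scalerDr !scalerA mulrAC mulVf // mul1r.
by rewrite opprD addrA [c *: e j0 + y]addrC addrK.
Qed.

Lemma lin_except_maximal_modular :
  modular_index w j0 -> maximal_modular_ideal mul E.
Proof.
case=> w_neq0 w_j0; split.
- split; first exact: lin_except_ideal.
  by exists ((w j0 j0)^-1 *: e j0); apply: lin_except_modular_unit.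
- exists (e j0); rewrite -[e j0]scale1r => /lin_except_scale_e/eqP.
  by rewrite oner_eq0.
- move=> N [N_ideal _] N_proper E_N.
  exact: lin_except_max_subspace (ideal_subspace N_ideal) E_N N_proper.
Qed.

Lemma lin_except_modular_index : modular_ideal mul E -> modular_index w j0.
Proof.
case=> -[_ ED EZ E_mul] [u Eu]; split.
- have [r r_u] := mul_e_l j0 u; have [y [Ey sqr]] := sqr_decomp j0.
  have : E ((1 - r * w j0 j0) *: e j0).
    have -> : (1 - r * w j0 j0) *: e j0 = (e j0 - mul (e j0) u) + r *: y.
      by rewrite r_u sqr scalerDr opprD addrA subrK scalerBl scale1r scalerA.
    exact: ED (Eu _) (EZ _ _ Ey).
  move/lin_except_scale_e/eqP; apply: contraTneq => ->.
  by rewrite mulr0 subr0 oner_eq0.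
- move=> j j_j0; have [y [Ey sqr]] := sqr_decomp j.
  apply: lin_except_scale_e; rewrite -(addrK y (_ *: _)) -sqr.
  exact: subspaceB lin_except_subspace (E_mul _ _ (lin_except_e j_j0)).1 Ey.
Qed.

End LinExcept.

Lemma proper_subspace_basis (M : A -> Prop) :
  subspace M -> Defs.proper M -> exists j, ~ M (e j).
Proof.
move=> M_sub [a Ma]; apply: NNPP => all_e; apply: Ma.
have [s [c ->]] := e_spans a; apply: subspace_sum => // i _.
have [_ _ MZ] := M_sub; apply: MZ; apply: NNPP => Mi; apply: all_e.
by exists i.
Qed.

Lemma modular_unit_sqr (M : A -> Prop) u : modular_unit mul M u ->
  forall j, exists r, M (e j - r *: mul (e j) (e j)).
Proof. by move=> Mu j; have [r r_u] := mul_e_l j u; exists r; rewrite -r_u. Qed.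

Section AddLinExcept.
Variables (M : A -> Prop) (j0 : L).
Hypothesis M_ideal : is_ideal mul M.
Hypothesis M_sqr : forall j, exists r, M (e j - r *: mul (e j) (e j)).
Local Notation N := (addsp M (lin_except e j0)).

Lemma addsp_lin_except_ideal : is_ideal mul N.
Proof.
have [_ _ MZ M_mul] := M_ideal.
have E_sub := lin_except_subspace j0; have [_ _ EZ] := E_sub.
have N_sub := addsp_subspace (ideal_subspace M_ideal) E_sub.
have [N0 ND NZ] := N_sub.
have N_sqr i : i != j0 -> N (mul (e i) (e i)).
  move=> i_j0; have [r Mr] := M_sqr i; have [r0|r_neq0] := eqVneq r 0.
    apply: addspl => //; move: Mr; rewrite r0 scale0r subr0 => /(M_mul (e i)).
    by case.
  (* e_i^2 = r^-1 e_i - r^-1 (e_i - r e_i^2) *)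
  exists (- r^-1 *: (e i - r *: mul (e i) (e i))), (r^-1 *: e i); split.
  - exact: MZ.
  - exact/EZ/lin_except_e.
  - by rewrite scaleNr scalerBr scalerA mulVf // scale1r opprB subrK.
split=> // a _ [m [y [Mm Ey ->]]]; rewrite (mulDr bilin) (mulDl bilin).
have [Nay Nya] := mul_lin_except_closed a N_sub N_sqr Ey.
have [Mam Mma] := M_mul a m Mm.
by split; apply: ND => //; apply: addspl.
Qed.

Lemma addsp_lin_except_e : ~ M (e j0) -> ~ N (e j0).
Proof.
move=> Mj0 [m [y [Mm Ey e_my]]]; apply: Mj0.
have [_ MD MZ M_mul] := M_ideal; have [r Mr] := M_sqr j0.
have Msqr : M (mul (e j0) (e j0)).
  have m_ey : m = e j0 - y by rewrite e_my addrK.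
  have := (M_mul (e j0) m Mm).1.
  by rewrite m_ey (mulBr bilin) (mul_e_lin_except Ey).1 subr0.
by rewrite -(subrK (r *: mul (e j0) (e j0)) (e j0)); apply/MD/MZ.
Qed.

End AddLinExcept.

Lemma maximal_modular_lin_except (M : A -> Prop) :
  maximal_modular_ideal mul M -> exists j0, forall x, M x <-> lin_except e j0 x.
Proof.
case=> -[M_ideal [u Mu]] M_proper M_max.
have M_sub := ideal_subspace M_ideal; have M_sqr := modular_unit_sqr Mu.
have [j0 Mj0] := proper_subspace_basis M_sub M_proper.
have E_sub := lin_except_subspace j0.
pose N := addsp M (lin_except e j0).
have N_modular : modular_ideal mul N.
  split; first exact: addsp_lin_except_ideal.
  by exists u => a; apply: addspl.
have N_proper : Defs.proper N by exists (e j0); apply: addsp_lin_except_e.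
have N_M := M_max N N_modular N_proper (fun x => addspl E_sub).
have E_M x : lin_except e j0 x -> M x by move=> Ex; apply/N_M/addspr.
by exists j0 => x; split; [apply: lin_except_max_subspace | apply: E_M].
Qed.
End EvolutionAlgebra.

Theorem corollary3p12 (K : numFieldType) (A : lmodType K) (mul : A -> A -> A)
  (L : eqType) (e : L -> A) (w : L -> L -> K)
  (HA : evolution_algebra mul e w) (M : A -> Prop) :
  (maximal_modular_ideal mul M <->
     exists i0 : L, modular_index w i0 /\ (forall x, M x <-> lin_except e i0 x)) /\
  (forall i0 : L, modular_index w i0 -> (forall x, M x <-> lin_except e i0 x) ->
     modular_unit mul M ((w i0 i0)^-1 *: e i0)).
Proof.
case: HA => bilin [e_spans e_free mul_e_orth] e_sqr; split; first split.
- move=> M_max.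
  have [i0 M_E] := maximal_modular_lin_except bilin e_spans mul_e_orth M_max.
  exists i0; split=> //.
  apply: (lin_except_modular_index bilin e_spans e_free mul_e_orth e_sqr).
  by rewrite -(pred_ext M_E); case: M_max.
- case=> i0 [i0_modular /pred_ext ->].
  exact: (lin_except_maximal_modular bilin e_spans e_free mul_e_orth e_sqr).
- move=> i0 [w_neq0 _] /pred_ext ->.
  exact: (lin_except_modular_unit bilin e_spans mul_e_orth e_sqr).
Qed.
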